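(* Let $\frac12\le M<\frac23$ and consider Algorithm C on an input whose optimal offline makespan is $1$. If job $j$ is handled by Step 5, then with $\gamma_j=y_{j-1}+p_j-(2-M)$ the chosen set $W$ satisfies $\gamma_j\le w_j\le M\cdot p_j$.
   Context: Model (two hierarchical machines with migration, bin stretching). Jobs $1,2,\dots,n$ arrive one by one. Job $j$ has a size $p_j>0$ and a grade of service (GoS) $g_j\in\{1,2\}$; a job of GoS $1$ may only be processed on machine $m_1$, a job of GoS $2$ may be processed on $m_1$ or on $m_2$. When job $j$ arrives, the algorithm must assign it, and may migrate previously arrived jobs (respecting GoS) of total size at most $M\cdot p_j$. The optimal offline makespan of the complete input is known in advance and scaled to $1$. Notation: $Y_{j}$ is the set of jobs on $m_2$ just after job $j$ has been handled, $y_j$ its total size, $y_0=0$; $p^{\max Y}_j$ is the largest size of a job in $Y_{j-1}$ ($0$ if empty); ''sorted $Y_{j-1}$'' lists $Y_{j-1}$ in non-increasing order of size; $w_j$ is the total size of the chosen set $W$. Algorithm C (parameter $M$). On arrival of job $j$: Step 2: if $g_j=1$ or $y_{j-1}\ge M$, assign $j$ to $m_1$. Step 3: else if $y_{j-1}+p_j\le 2-M$, assign $j$ to $m_2$. Step 4: else if $p^{\max Y}_j>M\cdot p_j$, assign $j$ to $m_1$. Step 5: otherwise let $W$ be the shortest prefix of sorted $Y_{j-1}$ with total size at least $p_j+y_{j-1}-(2-M)$ (or $W=Y_{j-1}$ if none exists); migrate the jobs of $W$ to $m_1$ and assign $j$ to $m_2$. *)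

(* Jobs are indexed 0..n-1 (job j+1 of the paper is job j here). *)
From mathcomp Require Import all_boot all_order all_algebra.
Set Implicit Arguments. Unset Strict Implicit. Unset Printing Implicit Defensive.
Import Order.TTheory GRing.Theory Num.Theory.
Local Open Scope ring_scope.

Section AlgC.
Variable R : realFieldType.
Variable M : R.
Variable p : nat -> R.
Variable g : nat -> nat.     (* grades of service, in {1,2} *)

Definition load (Y : seq nat) : R := \sum_(i <- Y) p i.

Definition pmaxY (Y : seq nat) : R := foldr Num.max 0 (map p Y).

Definition sortY (Y : seq nat) : seq nat := sort (fun a b => p b <= p a) Y.

(* shortest prefix of s with total size >= thr, or s itself if none exists *)
Definition shortest_prefix (s : seq nat) (thr : R) : seq nat :=
  take (find (fun k => thr <= load (take k s)) (iota 0 (size s).+1)) s.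

Definition Wof (Y : seq nat) (j : nat) : seq nat :=
  shortest_prefix (sortY Y) (load Y + p j - (2 - M)).

Definition stepOf (Y : seq nat) (j : nat) : nat :=
  if (g j == 1%N) || (M <= load Y) then 2%N
  else if load Y + p j <= 2 - M then 3%N
  else if M * p j < pmaxY Y then 4%N
  else 5%N.

Definition nextY (Y : seq nat) (j : nat) : seq nat :=
  match stepOf Y j with
  | 3%N => rcons Y j
  | 5%N => rcons [seq i <- Y | i \notin Wof Y j] j
  | _ => Y
  end.

(* Ystate k = contents of m2 just before job k arrives (after jobs 0..k-1) *)
Fixpoint Ystate (k : nat) : seq nat :=
  match k with
  | 0%N => [::]
  | k'.+1 => nextY (Ystate k') k'
  end.
End AlgC.

(* Offline schedules of jobs 0..n-1: a j = true means job j is on m2. *)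
Definition feasible_sched (n : nat) (g : nat -> nat) (a : nat -> bool) : Prop :=
  forall j, (j < n)%N -> g j = 1%N -> a j = false.

Definition load_m1 (R : realFieldType) (n : nat) (p : nat -> R) (a : nat -> bool) : R :=
  \sum_(j < n | ~~ a j) p j.
Definition load_m2 (R : realFieldType) (n : nat) (p : nat -> R) (a : nat -> bool) : R :=
  \sum_(j < n | a j) p j.

Definition opt_is_one (R : realFieldType) (n : nat) (p : nat -> R) (g : nat -> nat) : Prop :=
  (exists a, feasible_sched n g a /\ load_m1 n p a <= 1 /\ load_m2 n p a <= 1)
  /\ (forall a, feasible_sched n g a -> 1 <= Num.max (load_m1 n p a) (load_m2 n p a)).

(* Step 5 is entered only when y_{j-1} < M, y_{j-1} + p_j > 2 - M and every job on m2 has size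
   at most M p_j, so gamma_j > 0.  Since p_j <= 1 < 2 - M, the whole of Y_{j-1} already reaches
   gamma_j, hence so does the shortest prefix W.  For the upper bound, W is either empty, a single
   job (of size at most M p_j), or a prefix of the non-increasing list whose last job is no larger
   than its first; dropping that last job leaves load below gamma_j, so w_j < 2 gamma_j, and
   2 gamma_j <= M p_j is exactly where M <= 2/3 is needed. *)
From mathcomp Require Import all_boot all_order all_algebra.
From mathcomp Require Import lra.
Set Implicit Arguments. Unset Strict Implicit. Unset Printing Implicit Defensive.
Import Order.TTheory GRing.Theory Num.Theory.
Local Open Scope ring_scope.

Section Prefixes.
Variables (R : realFieldType) (p : nat -> R).
Implicit Types (s : seq nat) (thr B : R).

Let nonincr := fun a b => p b <= p a.

Lemma load_ge0 s : (forall y, y \in s -> 0 <= p y) -> 0 <= load p s.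
Proof. by move=> s_ge0; rewrite /load big_seq sumr_ge0. Qed.

Lemma load_take_succ_le k s B : 0 <= B -> (forall y, y \in s -> p y <= B) ->
  load p (take k.+1 s) <= load p (take k s) + B.
Proof.
move=> B_ge0; elim: s k => [|y s IHs] k s_leB; first by rewrite /load big_nil add0r.
have py_le := s_leB y (mem_head _ _).
case: k => [|k]; first by rewrite /= take0 /load big_cons !big_nil addr0 add0r.
rewrite /load /= !big_cons -addrA lerD2l.
by apply: IHs => z zs; apply: s_leB; rewrite in_cons zs orbT.
Qed.

Lemma load_take_succ_le_double x s k :
  sorted nonincr (x :: s) -> (forall y, y \in x :: s -> 0 <= p y) ->
  load p (take k.+2 (x :: s)) <= 2 * load p (take k.+1 (x :: s)).
Proof.
move=> srt xs_ge0.
have s_lex : forall y, y \in x :: s -> p y <= p x.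
  have /allP s_lex : all (nonincr x) s.
    by apply: (order_path_min _ srt) => a b c /= ba cb; apply: le_trans cb ba.
  by move=> y; rewrite in_cons => /orP[/eqP-> // | /s_lex].
have x_ge0 := xs_ge0 x (mem_head _ _).
have step := load_take_succ_le k.+1 x_ge0 s_lex.
suff px_le : p x <= load p (take k.+1 (x :: s)) by lra.
rewrite /load /= big_cons lerDl load_ge0 // => y /mem_take ys.
by apply: xs_ge0; rewrite in_cons ys orbT.
Qed.

Lemma shortest_prefix_ge s thr :
  thr <= load p s -> thr <= load p (shortest_prefix p s thr).
Proof.
move=> thr_le; rewrite /shortest_prefix.
set f := fun k => _; set k0 := find f _.
have has_f : has f (iota 0 (size s).+1).
  by apply/hasP; exists (size s); rewrite ?mem_iota //= /f take_size.
have := nth_find 0 has_f; rewrite -/k0 nth_iota ?add0n //.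
by rewrite -(size_iota 0 (size s).+1) -has_find.
Qed.

Lemma shortest_prefix_le s thr B :
  sorted nonincr s -> (forall y, y \in s -> 0 <= p y) ->
  0 <= B -> (forall y, y \in s -> p y <= B) ->
  load p (shortest_prefix p s thr) <= Num.max B (2 * thr).
Proof.
move=> srt s_ge0 B_ge0 s_leB; rewrite /shortest_prefix.
case: s srt s_ge0 s_leB => [|x s] srt s_ge0 s_leB.
  by rewrite /load big_nil le_max B_ge0.
set f := fun k => _; set k0 := find f _.
case Ek0: k0 => [|[|k]].
- by rewrite take0 /load big_nil le_max B_ge0.
- by rewrite le_max (le_trans (load_take_succ_le 0 B_ge0 s_leB)) // take0 /load big_nil add0r.
have lt_k0 : (k.+1 < k0)%N by rewrite Ek0.
have k0_le : (k0 <= (size (x :: s)).+1)%N.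
  by rewrite -(size_iota 0 (size (x :: s)).+1) find_size.
have := before_find 0 lt_k0; rewrite nth_iota ?add0n; last exact: leq_trans lt_k0 k0_le.
rewrite /f => /negbT; rewrite -ltNge => lt_thr.
have := load_take_succ_le_double k srt s_ge0.
by rewrite le_max; lra.
Qed.

End Prefixes.

Lemma pmaxY_ge (R : realFieldType) (p : nat -> R) (Y : seq nat) y :
  y \in Y -> p y <= pmaxY p Y.
Proof.
elim: Y => [//|z Y IHY]; rewrite in_cons /pmaxY /= le_max => /orP[/eqP-> | /IHY ->].
  by rewrite lexx.
by rewrite orbT.
Qed.

Lemma pmaxY_ge0 (R : realFieldType) (p : nat -> R) (Y : seq nat) : 0 <= pmaxY p Y.
Proof. by elim: Y => [|z Y IHY]; rewrite /pmaxY //= le_max IHY orbT. Qed.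

Lemma load_sortY (R : realFieldType) (p : nat -> R) (Y : seq nat) :
  load p (sortY p Y) = load p Y.
Proof. by rewrite /load (perm_big _ (permEl (perm_sort _ _))). Qed.

Lemma mem_Ystate (R : realFieldType) (M : R) p g k i :
  i \in Ystate M p g k -> (i < k)%N.
Proof.
elim: k i => [//|k IHk] i /=; rewrite /nextY.
case: (stepOf _ _ _ _ _) => [|[|[|[|[|[|?]]]]]]; try by move=> /IHk /ltnW.
- by rewrite mem_rcons in_cons => /orP[/eqP-> // | /IHk /ltnW].
- by rewrite mem_rcons in_cons mem_filter => /orP[/eqP-> // | /andP[_ /IHk /ltnW]].
Qed.

Lemma stepOf_eq5 (R : realFieldType) (M : R) p g Y j :
  stepOf M p g Y j = 5%N ->
  [/\ load p Y < M, 2 - M < load p Y + p j & pmaxY p Y <= M * p j].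
Proof.
rewrite /stepOf; case: ifP => // /negbT; rewrite negb_or -ltNge => /andP[_ ->].
by case: ifP => // /negbT; rewrite -ltNge => ->; case: ifP => // /negbT; rewrite -leNgt.
Qed.

Lemma opt_is_one_le1 (R : realFieldType) n (p : nat -> R) g j :
  (forall i, (i < n)%N -> 0 <= p i) -> opt_is_one n p g -> (j < n)%N -> p j <= 1.
Proof.
move=> p_ge0 [[a [_ [load1 load2]]] _] jn.
have le_sum (P : pred 'I_n) : P (Ordinal jn) -> p j <= \sum_(i < n | P i) p i.
  by move=> Pj; rewrite (bigD1 (Ordinal jn)) //= lerDl sumr_ge0 // => i _; apply: p_ge0.
case aj: (a j).
- by apply: le_trans load2; apply: (le_sum (fun i : 'I_n => a i)).
- by apply: le_trans load1; apply: (le_sum (fun i : 'I_n => ~~ a i)); rewrite /= aj.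
Qed.

Theorem mainTheorem11 (R : realFieldType) (M : R) (n : nat) (p : nat -> R) (g : nat -> nat) :
  2^-1 <= M -> M < 2 / 3 ->
  (forall j, (j < n)%N -> 0 < p j) ->
  (forall j, (j < n)%N -> g j = 1%N \/ g j = 2%N) ->
  opt_is_one n p g ->
  forall j, (j < n)%N ->
  stepOf M p g (Ystate M p g j) j = 5%N ->
  let Y := Ystate M p g j in
  let gamma := load p Y + p j - (2 - M) in
  gamma <= load p (Wof M p Y j) /\ load p (Wof M p Y j) <= M * p j.
Proof.
move=> _ M_lt p_gt0 _ opt j jn /stepOf_eq5[Y_lt Y_gt pmax_le] Y gamma.
have p_ge0 i : (i < n)%N -> 0 <= p i by move/p_gt0/ltW.
have pj_le1 := opt_is_one_le1 p_ge0 opt jn.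
have sY_ge0 y : y \in sortY p Y -> 0 <= p y.
  by rewrite mem_sort => /mem_Ystate yj; apply: p_ge0 (ltn_trans yj jn).
have sY_le y : y \in sortY p Y -> p y <= pmaxY p Y by rewrite mem_sort; apply: pmaxY_ge.
have sY_sorted : sorted (fun a b => p b <= p a) (sortY p Y).
  by apply: sort_sorted => a b; apply: le_total.
split.
- by apply: shortest_prefix_ge; rewrite load_sortY /gamma; lra.
- apply: le_trans (shortest_prefix_le _ sY_sorted sY_ge0 (pmaxY_ge0 p Y) sY_le) _.
  rewrite ge_max pmax_le /gamma /=; nra.
Qed.
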